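(* Let $k\ge2$, $p\in(0,1)$, $q=1-p$, and $R^*=\frac{(k-1)^{k-1}}{k^k}\cdot\frac1{p^{k-1}q}$. If $z\in\mathbb{C}$ with $|z|<R^*$ satisfies $\frac1qS^{(k)}(p^{k-1}qz)=1$, then $z=1$.
   Context: $s^{(k)}_i=\frac{k-1}{ki-1}\binom{ki-1}{i-1}$ for $i\ge1$, and $S^{(k)}(z)=\sum_{i\ge1}s^{(k)}_iz^i$; this series satisfies $S^{(k)}(z)=z/(1-S^{(k)}(z))^{k-1}$ within its disc of convergence. *)

From mathcomp Require Import all_boot all_order all_algebra.
From mathcomp Require Import complex.
From mathcomp Require Import all_classical all_reals all_analysis.
Import Order.TTheory GRing.Theory Num.Theory numFieldTopology.Exports numFieldNormedType.Exports.

Set Implicit Arguments.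
Unset Strict Implicit.
Unset Printing Implicit Defensive.

Local Open Scope ring_scope.
Local Open Scope complex_scope.
Local Open Scope classical_set_scope.

Definition fuss_s (R : realType) (k i : nat) : R[i] :=
  if i == 0%N then 0
  else ((k.-1)%:R / (k * i).-1%:R) * ('C((k * i).-1, i.-1))%:R.

(* S^{(k)}(w) = sum_{i >= 1} s^{(k)}_i w^i, as the limit of the partial sums
   (meaningful inside the disc of convergence). *)
Definition fussS (R : realType) (k : nat) (w : R[i]) : R[i] :=
  lim (series (fun i => (fuss_s R k i * w ^+ i : Num.ClosedField.sort R[i]%C))
        @ \oo).

Definition Rstar (R : realType) (k : nat) (p : R) : R :=
  ((k.-1)%:R ^+ k.-1 / k%:R ^+ k) * (p ^+ k.-1 * (1 - p))^-1.

(* The Fuss-Catalan series S is the compositional inverse of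
   f(x) = x (1 - x)^(k-1).  Formally: the coefficients of V = 1 - S are the
   Rothe-Hagen numbers A_n(-1), where A_n(x) = x/(x + kn) binom(x + kn, n), and
   the Rothe-Hagen convolution A(x) A(y) = A(x + y) gives V^2 = A(-2).  A direct
   comparison of A_n(-1) and A_n(-2) yields (k-1) X V' - (k/2) X (V^2)' = V - V^2,
   which forces u = f(S) to satisfy X u' = u, i.e. f(S) = X, up to any
   truncation order.  Analytically: |s_i| rho^i <= 1 for
   rho = (k-1)^(k-1)/k^k, so geometric tail bounds give f(S(w)) = w whenever
   |w| < rho.  For w = p^(k-1) q z we have |w| < rho, and S(w) = q then gives
   w = f(q) = p^(k-1) q, i.e. z = 1. *)

From mathcomp Require Import all_boot all_order all_algebra.
From mathcomp Require Import ring lra zify.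
From mathcomp Require Import complex.
From mathcomp Require Import all_classical all_reals all_analysis.
Import Order.TTheory GRing.Theory Num.Theory numFieldTopology.Exports numFieldNormedType.Exports.

Set Implicit Arguments.
Unset Strict Implicit.
Unset Printing Implicit Defensive.

Local Open Scope ring_scope.

Definition fuss_inv (R : pzRingType) k (x : R) := x * (1 - x) ^+ k.-1.

Lemma horner_fuss_inv (R : comNzRingType) k (p : {poly R}) x :
  (fuss_inv k p).[x] = fuss_inv k p.[x].
Proof. by rewrite /fuss_inv !hornerE. Qed.

Section GeneralizedBinomial.
Variable F : numFieldType.
Implicit Types (t : F) (m : nat).

Definition binomr t m : F := (\prod_(i < m) (t - i%:R)) / m`!%:R.

Lemma binomr0 t : binomr t 0 = 1.
Proof. by rewrite /binomr big_ord0 fact0 divr1. Qed.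

Lemma binomrS t m : binomr t m.+1 = t * binomr (t - 1) m / m.+1%:R.
Proof.
rewrite /binomr big_ord_recl /= subr0 factS natrM.
under eq_bigr => i _ do rewrite /bump /= add1n mulrSr opprD addrA addrAC.
have mf : m`!%:R != 0 :> F by rewrite pnatr_eq0 -lt0n fact_gt0.
by field; rewrite ?nat1r ?mf ?pnatr_eq0.
Qed.

Lemma binomrSr t m : binomr t m.+1 = binomr t m * (t - m%:R) / m.+1%:R.
Proof.
rewrite /binomr big_ord_recr /= factS natrM.
have mf : m`!%:R != 0 :> F by rewrite pnatr_eq0 -lt0n fact_gt0.
by field; rewrite ?nat1r ?mf ?pnatr_eq0.
Qed.

Lemma binomr_pascal t m : binomr t m.+1 = binomr (t - 1) m.+1 + binomr (t - 1) m.
Proof. by rewrite binomrS binomrSr; field; rewrite ?nat1r ?pnatr_eq0. Qed.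

Lemma binomr_nat n m : binomr n%:R m = 'C(n, m)%:R.
Proof.
elim: n m => [|n IHn] [|m]; rewrite ?binomr0 ?bin0 //.
  by rewrite binomrS !mul0r bin0n.
by rewrite binomr_pascal mulrSr addrK !IHn binS natrD.
Qed.

Lemma mul_binomr_down t m : binomr (t + 1) m * (t + 1 - m%:R) = (t + 1) * binomr t m.
Proof.
have := binomrS (t + 1) m; rewrite binomrSr addrK => E.
have m1 : m.+1%:R != 0 :> F by rewrite pnatr_eq0.
by apply: (mulIf (invr_neq0 m1)); rewrite E.
Qed.

End GeneralizedBinomial.

Lemma int_shift_invariant (T : Type) (f : int -> T) :
  (forall y, f y = f (y - 1)) -> forall y, f y = f 0.
Proof.
move=> fB1 [] m; elim: m => [|m IHm] //.
- by rewrite fB1 -IHm -addn1 PoszD addrK.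
- by rewrite -IHm [RHS]fB1; congr f; rewrite !NegzE -addn1 PoszD opprD.
Qed.

Section RotheHagen.
Variables (F : numFieldType) (k : nat).
Implicit Types (x y : F) (n m : nat).

(* [rothe k n x] is x / (x + k n) * binom(x + k n, n), written without the
   division by x + k n. *)
Definition rothe n x : F :=
  if n is n'.+1 then x / n%:R * binomr (x + (k * n)%:R - 1) n' else 1.

Lemma rothe_at0 n : rothe n.+1 0 = 0.
Proof. by rewrite /rothe !mul0r. Qed.

Lemma rotheSB1 m y : rothe m.+1 y - rothe m.+1 (y - 1) = rothe m (y + k%:R - 1).
Proof.
case: m => [|m]; first by rewrite /rothe !binomr0 !divr1 !mulr1 opprB addrC subrK.
rewrite /rothe.
set t := y + (k * m.+2)%:R - 1 - 1.
have -> : y + (k * m.+2)%:R - 1 = t + 1 by rewrite /t subrK.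
have -> : y - 1 + (k * m.+2)%:R - 1 = t by rewrite /t; ring.
have -> : y + k%:R - 1 + (k * m.+1)%:R - 1 = t by rewrite /t !natrM -!nat1r; ring.
rewrite binomrS addrK binomrSr /t !natrM -!nat1r.
by field; rewrite ?nat1r ?pnatr_eq0.
Qed.

Lemma rothe_conv x n (y : int) :
  \sum_(i < n.+1) rothe i x * rothe (n - i) y%:~R = rothe n (x + y%:~R).
Proof.
elim: n y => [|n IHn] y; first by rewrite big_ord_recl big_ord0 /= addr0 mulr1.
pose D (y : int) := \sum_(i < n.+2) rothe i x * rothe (n.+1 - i) y%:~R
                    - rothe n.+1 (x + y%:~R).
suff /(_ y)/eqP : forall z : int, D z = 0 by rewrite subr_eq0 => /eqP.
have subSn_ord (i : 'I_n.+1) : (n.+1 - i = (n - i).+1)%N by rewrite subSn // -ltnS.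
have D0 : D 0 = 0.
  rewrite /D big_ord_recr /= subnn addr0 big1 ?add0r ?mulr1 ?subrr // => i _.
  by rewrite subSn_ord rothe_at0 mulr0.
have DB1 z : D z = D (z - 1).
  have zB1 : (z - 1)%:~R = z%:~R - 1 :> F by rewrite intrB.
  have zDk : (z + (k%:Z - 1))%:~R = z%:~R + k%:R - 1 :> F.
    by rewrite intrD intrB addrA.
  set E := rothe n (x + (z + (k%:Z - 1))%:~R).
  have sumB1 : \sum_(i < n.+2) rothe i x * rothe (n.+1 - i) z%:~R
             - \sum_(i < n.+2) rothe i x * rothe (n.+1 - i) (z - 1)%:~R = E.
    rewrite -sumrB big_ord_recr /= subnn subrr addr0 /E -IHn.
    by apply: eq_bigr => i _; rewrite -mulrBr subSn_ord zB1 rotheSB1 zDk.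
  have rotheB1 : rothe n.+1 (x + z%:~R) - rothe n.+1 (x + (z - 1)%:~R) = E.
    by rewrite zB1 addrA rotheSB1 /E zDk !addrA.
  apply/eqP; rewrite -subr_eq0; apply/eqP; transitivity (E - E); last exact: subrr.
  by rewrite -{1}sumB1 -rotheB1 /D; ring.
by move=> z; rewrite (int_shift_invariant DB1).
Qed.

End RotheHagen.

Section RotheAtNegative.
Variables (F : numFieldType) (k : nat).
Hypothesis k_ge2 : (2 <= k)%N.

Lemma rotheSN1 m : rothe k m.+1 (-1 : F) = - ('C(k * m.+1 - 2, m)%:R / m.+1%:R).
Proof.
rewrite /rothe (_ : -1 + _ - 1 = (k * m.+1 - 2)%N%:R) ?binomr_nat; first ring.
by rewrite natrB ?(leq_trans k_ge2) ?leq_pmulr //; ring.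
Qed.

Lemma rotheN1N2 n :
  2 * ((k.-1)%:R * n%:R - 1) * rothe k n (-1) = (k%:R * n%:R - 2) * rothe k n (-2 : F).
Proof.
case: n => [|m]; first by rewrite /= mulr0 mulr1; ring.
rewrite /rothe.
set t := -2 + (k * m.+1)%:R - 1.
have -> : -1 + (k * m.+1)%:R - 1 = t + 1 by rewrite /t; ring.
have := mul_binomr_down t m.
have -> : t + 1 - m%:R = (k.-1)%:R * m.+1%:R - 1.
  by rewrite /t natrM; case: k k_ge2 => // k' _; rewrite -!nat1r; ring.
have -> : k%:R * m.+1%:R - 2 = t + 1 by rewrite /t natrM; ring.
move=> down; transitivity (-2 / m.+1%:R * (binomr (t + 1) m * ((k.-1)%:R * m.+1%:R - 1))).
  by ring.
by rewrite down; ring.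
Qed.

Lemma rotheSN1_fuss m : - rothe k m.+1 (-1 : F)
  = (k.-1)%:R / (k * m.+1).-1%:R * 'C((k * m.+1).-1, m)%:R.
Proof.
rewrite rotheSN1 opprK.
set N := (k * m.+1)%N.
have N_ge2 : (2 <= N)%N by rewrite (leq_trans k_ge2) // leq_pmulr.
have := mul_bin_down N.-1 m.
rewrite (_ : N.-1.-1 = N - 2)%N; last by rewrite -subn2; lia.
rewrite (_ : N.-1 - m = k.-1 * m.+1)%N; last first.
  by rewrite /N -!subn1 mulnBl mul1n -subnDA add1n.
move=> /(congr1 (fun n => n%:R : F)); rewrite !natrM => down.
have N1_neq0 : N.-1%:R != 0 :> F by rewrite pnatr_eq0; lia.
have k1_neq0 : k.-1%:R != 0 :> F by rewrite pnatr_eq0; lia.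
have m1_neq0 : m.+1%:R != 0 :> F by rewrite pnatr_eq0.
have -> : 'C(N.-1, m)%:R = N.-1%:R * 'C(N - 2, m)%:R / (k.-1%:R * m.+1%:R) :> F.
  by rewrite down; field; rewrite ?nat1r ?k1_neq0 ?m1_neq0.
by field; rewrite ?nat1r ?N1_neq0 ?k1_neq0 ?m1_neq0.
Qed.

End RotheAtNegative.

Section EulerOperator.
Variable F : numFieldType.
Implicit Types p q : {poly F}.

Definition eulerD p := 'X * p^`().

Lemma coef_eulerD p i : (eulerD p)`_i = p`_i *+ i.
Proof. by rewrite coefXM coef_deriv; case: i => [|i] //=; rewrite mulr0n. Qed.

Lemma eulerDM p q : eulerD (p * q) = eulerD p * q + p * eulerD q.
Proof. by rewrite /eulerD derivM mulrDr mulrA mulrCA mulrA. Qed.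

Lemma eulerDX p n : eulerD (p ^+ n.+1) = (p ^+ n * eulerD p) *+ n.+1.
Proof. by rewrite /eulerD deriv_exp /= mulrnAr [p^`() * _]mulrC mulrCA. Qed.

Lemma eulerDBl p : eulerD (1 - p) = - eulerD p.
Proof. by rewrite /eulerD derivB -polyC1 derivC sub0r mulrN. Qed.

End EulerOperator.

Lemma coefMl_eq0_upto (R : nzSemiRingType) N (p q : {poly R}) :
  (forall i, (i <= N)%N -> p`_i = 0) -> forall n, (n <= N)%N -> (q * p)`_n = 0.
Proof.
move=> p0 n nN; rewrite coefM big1 // => j _.
by rewrite p0 ?mulr0 // (leq_trans (leq_subr _ _)).
Qed.

Section FussTruncation.
Variables (F : numFieldType) (k : nat).
Hypothesis k_ge2 : (2 <= k)%N.

Definition rothe_trunc N : {poly F} := \poly_(i < N.+1) rothe k i (-1).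

Definition fuss_trunc N : {poly F} := 1 - rothe_trunc N.

Lemma coef_rothe_trunc N i : (i <= N)%N -> (rothe_trunc N)`_i = rothe k i (-1).
Proof. by move=> iN; rewrite coef_poly ltnS iN. Qed.

Lemma coef_fuss_trunc N i :
  (i <= N)%N -> (fuss_trunc N)`_i = (i == 0)%:R - rothe k i (-1).
Proof. by move=> iN; rewrite coefB coef1 coef_rothe_trunc. Qed.

Lemma coef_rothe_trunc_sqr N n :
  (n <= N)%N -> (rothe_trunc N ^+ 2)`_n = rothe k n (-2).
Proof.
move=> nN; rewrite expr2 coefM (_ : -2 = -1 + (-1)%:~R) -?rothe_conv; last first.
  by rewrite -opprD.
apply: eq_bigr => i _; rewrite !coef_rothe_trunc //.
  by rewrite (leq_trans (leq_subr _ _)).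
by rewrite (leq_trans _ nN) // -ltnS.
Qed.

(* Coefficientwise, [rotheN1N2] says that V = 1 - S satisfies the differential
   equation (k - 1) X V' - (k / 2) X (V^2)' = V - V^2. *)
Definition rothe_trunc_defect N : {poly F} :=
  (k.-1)%:R *: eulerD (rothe_trunc N) - (k%:R / 2) *: eulerD (rothe_trunc N ^+ 2)
  - (rothe_trunc N - rothe_trunc N ^+ 2).

Lemma coef_rothe_trunc_defect N n : (n <= N)%N -> (rothe_trunc_defect N)`_n = 0.
Proof.
move=> nN; rewrite !coefB !coefZ !coef_eulerD coef_rothe_trunc_sqr ?coef_rothe_trunc //.
have two_neq0 : (2 : F) != 0 by rewrite pnatr_eq0.
apply: (mulfI two_neq0); rewrite mulr0.
have := rotheN1N2 F k_ge2 n.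
set a := rothe k n (-1); set b := rothe k n (-2) => ab.
rewrite -[a *+ n]mulr_natr -[b *+ n]mulr_natr.
transitivity (2 * ((k.-1)%:R * n%:R - 1) * a - (k%:R * n%:R - 2) * b).
  by field.
by rewrite ab subrr.
Qed.

Lemma eulerD_fuss_inv_trunc N :
  eulerD (fuss_inv k (fuss_trunc N)) - fuss_inv k (fuss_trunc N)
  = rothe_trunc N ^+ k.-2 * rothe_trunc_defect N.
Proof.
rewrite /fuss_inv /fuss_trunc (subKr 1) /rothe_trunc_defect (eulerDM (1 - _)) eulerDBl.
case: k k_ge2 => [|[|k']] //= _.
set V := rothe_trunc N; set T := eulerD V.
rewrite !eulerDX expr1.
have -> : (k'.+2%:R / 2 : F) *: (V * T *+ 2) = k'.+2%:R *: (V * T).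
  by rewrite -[V * T *+ 2]scaler_nat scalerA divfK ?pnatr_eq0.
by rewrite -/T -mulr_natl !scaler_nat !exprS; ring.
Qed.

Lemma coef_fuss_inv_trunc N n : (1 <= N)%N -> (n <= N)%N ->
  (fuss_inv k (fuss_trunc N))`_n = (n == 1)%:R.
Proof.
move=> N_ge1 nN.
have := coefMl_eq0_upto (rothe_trunc N ^+ k.-2) (@coef_rothe_trunc_defect N) nN.
rewrite -eulerD_fuss_inv_trunc coefB coef_eulerD.
case: (eqVneq n 1) => [-> _ | n_neq1].
  rewrite /fuss_inv /fuss_trunc subKr coefM big_ord_recr big_ord_recl big_ord0 /=.
  have rothe1 : rothe k 1 (-1) = -1 :> F by rewrite /rothe /= binomr0 divr1 mulr1.
  rewrite addr0 subnn subn0 !coefB !coef1 !coef_rothe_trunc // rothe1 /=.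
  rewrite -horner_coef0 horner_exp horner_coef0 coef_rothe_trunc // expr1n.
  by rewrite subrr mul0r add0r sub0r opprK mulr1.
set u := _`_n; move=> /eqP; rewrite -[u *+ n]mulr_natr -{2}[u]mulr1 -mulrBr mulf_eq0.
by rewrite subr_eq0 pnatr_eq1 (negbTE n_neq1) orbF => /eqP.
Qed.

End FussTruncation.

Section GeometricSums.
Variable F : numFieldType.

Lemma ler_term_sumr M (f : nat -> F) j : (j < M)%N -> (forall i, 0 <= f i) ->
  f j <= \sum_(i < M) f i.
Proof.
move=> jM f_ge0; rewrite (bigD1 (Ordinal jM)) //= lerDl.
by apply: sumr_ge0 => i _.
Qed.

Lemma ler_sum_geom (t : F) M : 0 <= t < 1 -> \sum_(i < M) t ^+ i <= (1 - t)^-1.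
Proof.
case/andP=> t_ge0 t_lt1; have t1_gt0 : 0 < 1 - t by rewrite subr_gt0.
have geom : (1 - t) * \sum_(i < M) t ^+ i = 1 - t ^+ M.
  by apply: oppr_inj; rewrite -mulNr !opprB -subrX1.
rewrite -(ler_pM2l t1_gt0) geom mulfV ?gt_eqF // lerBlDr lerDl.
exact: exprn_ge0.
Qed.

Lemma ler_sum_geom_tail (t : F) N M : 0 <= t < 1 ->
  \sum_(i < M | (N < i)%N) t ^+ i <= t ^+ N.+1 / (1 - t).
Proof.
case/andP=> t_ge0 t_lt1; have t1_gt0 : 0 < 1 - t by rewrite subr_gt0.
suff tail : (1 - t) * \sum_(i < M | (N < i)%N) t ^+ i
            + t ^+ (maxn M N.+1) = t ^+ N.+1.
  rewrite ler_pdivlMr // mulrC -[X in _ <= X]tail lerDl.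
  exact: exprn_ge0.
elim: M => [|M IHM]; first by rewrite big_ord0 mulr0 add0r max0n.
rewrite big_mkcond big_ord_recr -big_mkcond /= mulrDr.
case: (ltnP N M) => [NM | MN].
  rewrite (maxn_idPl NM) in IHM.
  by rewrite (maxn_idPl (leqW NM)) -IHM exprS; ring.
rewrite (maxn_idPr (leqW MN)) in IHM.
by rewrite mulr0 addr0 (maxn_idPr (MN : M.+1 <= N.+1)%N).
Qed.

End GeometricSums.

Section FussRadius.
Variables (F : numFieldType) (k : nat).
Hypothesis k_ge2 : (2 <= k)%N.

Definition fuss_radius : F := (k.-1)%:R ^+ k.-1 / k%:R ^+ k.

Lemma fuss_radius_gt0 : 0 < fuss_radius.
Proof. by rewrite divr_gt0 // exprn_gt0 // ltr0n; lia. Qed.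

(* The term i = n of the binomial expansion of ((k - 1)/k + 1/k)^(k n) = 1. *)
Lemma bin_fuss_radius_le1 n : 'C(k * n, n)%:R * fuss_radius ^+ n <= 1.
Proof.
have k_neq0 : k%:R != 0 :> F by rewrite pnatr_eq0; lia.
set x : F := (k.-1)%:R / k%:R; set y : F := k%:R^-1.
have xy1 : x + y = 1.
  by rewrite /x /y -[X in _ + X]mul1r -mulrDl natr1 prednK ?divff //; lia.
have radiusE : fuss_radius = x ^+ k.-1 * y.
  rewrite /fuss_radius /x /y expr_div_n -mulrA -exprVn; congr (_ * _).
  by rewrite -exprVn -exprSr prednK //; lia.
have := exprDn x y (k * n); rewrite xy1 expr1n => expand; rewrite [X in _ <= X]expand.
have n_lt : (n < (k * n).+1)%N by rewrite ltnS leq_pmull //; lia.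
apply: le_trans (ler_term_sumr (f := fun i => x ^+ (k * n - i) * y ^+ i *+ 'C(k * n, i)) n_lt _).
  rewrite /= radiusE exprMn -exprM mulr_natl.
  by rewrite -subn1 mulnBl mul1n.
by move=> i; rewrite mulrn_wge0 // mulr_ge0 // exprn_ge0 // ?invr_ge0 // divr_ge0.
Qed.

Lemma rotheN1_fuss_radius_le1 i : `|rothe k i (-1 : F)| * fuss_radius ^+ i <= 1.
Proof.
case: i => [|m]; first by rewrite /= normr1 mul1r expr0.
rewrite rotheSN1 // normrN ger0_norm ?divr_ge0 //.
apply: le_trans (bin_fuss_radius_le1 m.+1).
apply: ler_wpM2r; first by rewrite exprn_ge0 // ltW // fuss_radius_gt0.
rewrite ler_pdivrMr ?ltr0n //.
apply: (@le_trans _ _ 'C(k * m.+1, m.+1)%:R); last by rewrite ler_peMr // ler1n.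
set a := (k * m.+1 - 2)%N.
have -> : (k * m.+1 = a.+2)%N.
  have : (2 <= k * m.+1)%N by rewrite (leq_trans k_ge2) // leq_pmulr.
  by rewrite /a; lia.
by rewrite ler_nat !binS; apply: leq_trans (leq_addl _ _) (leq_addr _ _).
Qed.

Lemma rotheN1_mul_exp_le s i : 0 <= s ->
  `|rothe k i (-1 : F)| * s ^+ i <= (s / fuss_radius) ^+ i.
Proof.
move=> s_ge0; have rho_gt0 := fuss_radius_gt0.
have rhoX_neq0 : fuss_radius ^+ i != 0 by rewrite expf_neq0 // gt_eqF.
rewrite expr_div_n -[X in _ <= X]mul1r.
have -> : `|rothe k i (-1 : F)| * s ^+ i
          = `|rothe k i (-1)| * fuss_radius ^+ i * (s ^+ i / fuss_radius ^+ i).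
  by field.
by rewrite ler_wpM2r ?rotheN1_fuss_radius_le1 // divr_ge0 // exprn_ge0 // ltW.
Qed.

End FussRadius.

Section Majorants.
Variable F : numFieldType.
Implicit Types p q : {poly F}.

Definition majorized p q := forall i, `|p`_i| <= q`_i.

Lemma majorized_ge0 p q : majorized p q -> forall i, 0 <= q`_i.
Proof. by move=> pq i; apply: le_trans (pq i). Qed.

Lemma majorizedM p1 q1 p2 q2 :
  majorized p1 q1 -> majorized p2 q2 -> majorized (p1 * p2) (q1 * q2).
Proof.
move=> pq1 pq2 i; rewrite !coefM; apply: le_trans (ler_norm_sum _ _ _) _.
by apply: ler_sum => j _; rewrite normrM ler_pM.
Qed.

Lemma majorizedX p q n : majorized p q -> majorized (p ^+ n) (q ^+ n).
Proof.
move=> pq; elim: n => [|n IHn]; first by move=> i; rewrite !coef1 normr_nat.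
by rewrite !exprS; apply: majorizedM.
Qed.

Lemma ler_coef_horner q x i : (forall j, 0 <= q`_j) -> 0 <= x ->
  q`_i * x ^+ i <= q.[x].
Proof.
move=> q_ge0 x_ge0.
rewrite (@horner_coef_wide _ (maxn (size q) i.+1)) ?leq_maxl //.
apply: (ler_term_sumr (f := fun j => q`_j * x ^+ j)); first by rewrite leq_max ltnSn orbT.
by move=> j; rewrite mulr_ge0 // exprn_ge0.
Qed.

End Majorants.

Section FussTail.
Variables (F : numFieldType) (k : nat).
Hypothesis k_ge2 : (2 <= k)%N.
Local Notation rho := (fuss_radius F k).

Definition abs_rothe_trunc N : {poly F} := \poly_(i < N.+1) `|rothe k i (-1)|.

Lemma majorized_fuss_inv_trunc N :
  majorized (fuss_inv k (fuss_trunc F k N)) (abs_rothe_trunc N ^+ k).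
Proof.
have majorized_rothe : majorized (rothe_trunc F k N) (abs_rothe_trunc N).
  by move=> i; rewrite !coef_poly; case: ifP; rewrite ?normr0 ?normr_id.
rewrite -[in abs_rothe_trunc N ^+ k](prednK (ltnW k_ge2)) exprS.
rewrite /fuss_inv /fuss_trunc (subKr 1).
apply: majorizedM; last exact: majorizedX.
move=> [|i]; rewrite coefB coef1 !coef_poly /=; first by rewrite subrr normr0.
by rewrite sub0r normrN; case: ifP; rewrite ?normr0 ?normr_id.
Qed.

Lemma horner_abs_rothe_trunc_le N (s : F) : 0 <= s -> s < rho ->
  0 <= (abs_rothe_trunc N).[s] <= (1 - s / rho)^-1.
Proof.
move=> s_ge0 s_lt; have rho_gt0 := fuss_radius_gt0 F k_ge2.
rewrite (@horner_coef_wide _ N.+1) ?size_poly //.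
apply/andP; split.
  by apply: sumr_ge0 => i _; rewrite coef_poly ltn_ord mulr_ge0 // exprn_ge0.
apply: le_trans (ler_sum_geom N.+1 _); last first.
  by rewrite ltr_pdivrMr // mul1r s_lt divr_ge0 // ltW.
by apply: ler_sum => i _; rewrite coef_poly ltn_ord rotheN1_mul_exp_le.
Qed.

Lemma fuss_inv_trunc_tail N (w r s : F) :
  (1 <= N)%N -> `|w| <= r -> 0 <= r -> r < s -> s < rho ->
  `|(fuss_inv k (fuss_trunc F k N)).[w] - w|
    <= (1 - s / rho)^-1 ^+ k * ((r / s) ^+ N.+1 / (1 - r / s)).
Proof.
move=> N_ge1 w_le r_ge0 r_lt_s s_lt.
have s_gt0 : 0 < s by apply: le_lt_trans r_lt_s.
set P := fuss_inv k _; set G := (1 - s / rho)^-1; set t := r / s.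
have t_ge0 : 0 <= t by rewrite divr_ge0 // ltW.
have t_lt1 : t < 1 by rewrite ltr_pdivrMr // mul1r.
have coefP_le i : `|P`_i| * s ^+ i <= G ^+ k.
  have P_maj := majorized_fuss_inv_trunc N.
  apply: le_trans (_ : (abs_rothe_trunc N ^+ k)`_i * s ^+ i <= _).
    by rewrite ler_wpM2r // exprn_ge0 // ltW.
  apply: le_trans (ler_coef_horner _ (majorized_ge0 P_maj) (ltW s_gt0)) _.
  have /andP[W_ge0 W_le] := horner_abs_rothe_trunc_le N (ltW s_gt0) s_lt.
  by rewrite horner_exp lerXn2r ?nnegrE // (le_trans W_ge0).
rewrite -[w in _ - w]hornerX -hornerN -hornerD horner_coef.
apply: le_trans (ler_norm_sum _ _ _) _.
rewrite (bigID (fun i : 'I__ => (N < i)%N)) /= [X in _ + X]big1 ?addr0 => [|i]; last first.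
  by rewrite -leqNgt => iN; rewrite coefB coefX coef_fuss_inv_trunc // subrr mul0r normr0.
apply: le_trans (_ : \sum_(i < size (P - 'X) | (N < i)%N) G ^+ k * t ^+ i <= _).
  apply: ler_sum => i Ni.
  rewrite coefB coefX (_ : (i == 1 :> nat) = false) ?subr0; last by apply/negbTE; lia.
  apply: le_trans (_ : `|P`_i| * r ^+ i <= _).
    by rewrite normrM normrX ler_wpM2l // lerXn2r ?nnegrE.
  have -> : `|P`_i| * r ^+ i = `|P`_i| * s ^+ i * t ^+ i.
    by rewrite /t expr_div_n; field; rewrite expf_neq0 // lt0r_neq0.
  by rewrite ler_wpM2r // exprn_ge0.
rewrite -mulr_sumr ler_wpM2l ?ler_sum_geom_tail ?t_ge0 //.
by rewrite exprn_ge0 // invr_ge0 subr_ge0 ler_pdivrMr ?mul1r ?fuss_radius_gt0 // ltW.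
Qed.

End FussTail.

Local Open Scope complex_scope.
Local Open Scope classical_set_scope.

Section ComplexSequences.
Variable R : realType.
Local Notation C := (Num.ClosedField.sort R[i]).
Implicit Types (a b : nat -> R) (u : nat -> C).

Lemma cvgXn (K : numFieldType) (T : Type) (F : set_system T) {FF : Filter F}
    (f : T -> K) (a : K) n :
  f x @[x --> F] --> a -> f x ^+ n @[x --> F] --> a ^+ n.
Proof.
move=> fa; elim: n => [|n IHn]; first exact: cvg_cst.
by under eq_fun do rewrite exprS; rewrite exprS; apply: cvgM.
Qed.

Lemma normc_real (x : R) : `|x%:C| = `|x|%:C.
Proof. by rewrite normc_def /= expr0n addr0 sqrtr_sqr. Qed.

Lemma cvg_real_complex a (l : R) :
  a n @[n --> \oo] --> l -> ((a n)%:C : C) @[n --> \oo] --> (l%:C : C).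
Proof.
move=> al; apply/cvgrPdist_lt => eps eps_gt0.
have epsE := esym (RRe_real (gtr0_real eps_gt0)).
rewrite epsE ltcR in eps_gt0; rewrite epsE.
near=> n; rewrite -raddfB normc_real ltcR.
by near: n; apply: cvgr_dist_lt.
Unshelve. all: by end_near.
Qed.

Lemma cvgn_series_geom_dom a (b : R) : 0 <= b < 1 ->
  (forall i, `|a i| <= b ^+ i) -> cvgn (series a).
Proof.
case/andP=> b_ge0 b_lt1 ab; apply: normed_cvg.
apply: (@series_le_cvg _ _ (geometric 1 b)) => [n|n|n|].
- exact: normr_ge0.
- by rewrite /geometric /= mul1r exprn_ge0.
- by rewrite /geometric /= mul1r.
by apply: is_cvg_geometric_series; rewrite ger0_norm.
Qed.

Lemma norm_Im_le (x : C) : `|complex.Im x|%:C <= `|x|.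
Proof.
have normi : `|'i : C| = 1 by rewrite normc_def /= expr0n add0r expr1n sqrtr1.
by have := normc_ge_Re (x * 'i); rewrite ReiNIm normrN normrM normi mulr1.
Qed.

Lemma cvgn_complex_series_geom_dom u (b : R) : 0 <= b < 1 ->
  (forall i, `|u i| <= (b ^+ i)%:C) -> cvgn (series u).
Proof.
move=> b01 ub.
have Re_cvg : cvgn (series (fun i => complex.Re (u i))).
  by apply: (cvgn_series_geom_dom b01) => i; rewrite -lecR (le_trans (normc_ge_Re _)).
have Im_cvg : cvgn (series (fun i => complex.Im (u i))).
  by apply: (cvgn_series_geom_dom b01) => i; rewrite -lecR (le_trans (norm_Im_le _)).
have -> : series u = fun n => (series (fun i => complex.Re (u i)) n)%:C
                             + 'i * (series (fun i => complex.Im (u i)) n)%:C.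
  by apply/funext => n; rewrite {1}[series u n]complexE /series /= !raddf_sum.
apply/cvg_ex; eexists; apply: cvgD; first exact: cvg_real_complex Re_cvg.
by apply: cvgM; [exact: cvg_cst | exact: cvg_real_complex Im_cvg].
Qed.

Lemma cvg_complex_real_dominated u (l : C) b : b n @[n --> \oo] --> 0 ->
  (\forall n \near \oo, `|u n - l| <= (b n)%:C) -> u n @[n --> \oo] --> l.
Proof.
move=> b0 ub; apply/cvgrPdist_le => eps eps_gt0.
have epsE := esym (RRe_real (gtr0_real eps_gt0)).
rewrite epsE ltcR in eps_gt0; rewrite epsE.
near=> n; rewrite distrC; apply: le_trans (_ : (b n)%:C <= _); first by near: n.
rewrite lecR (le_trans (ler_norm _)) //.
by near: n; apply: cvgr0_norm_le.
Unshelve. all: by end_near.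
Qed.

End ComplexSequences.

Section FussSeries.
Variables (R : realType) (k : nat).
Hypothesis k_ge2 : (2 <= k)%N.
Local Notation C := (Num.ClosedField.sort R[i]).
Local Notation fuss_term w := (fun i => (fuss_s R k i * w ^+ i : C)).

Lemma fuss_radius_complex : fuss_radius C k = (fuss_radius R k)%:C.
Proof. by rewrite /fuss_radius rmorphM rmorphXn fmorphV rmorphXn !rmorph_nat. Qed.

Lemma fuss_sE i : fuss_s R k i = (i == 0)%:R - rothe k i (-1).
Proof.
case: i => [|m]; first by rewrite /fuss_s /= subrr.
by rewrite /fuss_s /= sub0r rotheSN1_fuss.
Qed.

Lemma series_fuss_term (w : C) N : series (fuss_term w) N.+1 = (fuss_trunc C k N).[w].
Proof.
rewrite seriesEord /= (@horner_coef_wide _ N.+1).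
  by apply: eq_bigr => i _; rewrite (fuss_sE i) coef_fuss_trunc // -ltnS.
rewrite /fuss_trunc; apply: (leq_trans (size_polyD _ _)).
by rewrite size_polyN geq_max size_poly1 size_poly.
Qed.

Lemma norm_fuss_term_le (w : C) i :
  `|fuss_term w i| <= (`|w| / fuss_radius C k) ^+ i.
Proof.
apply: le_trans (rotheN1_mul_exp_le k_ge2 _ (normr_ge0 w)).
rewrite normrM normrX fuss_sE ler_wpM2r ?exprn_ge0 //.
by case: i => [|i] /=; rewrite ?subrr ?normr0 ?sub0r ?normrN.
Qed.

Lemma fussS_cvg (w : C) : `|w| < fuss_radius C k ->
  series (fuss_term w) n @[n --> \oo] --> (fussS k w : C).
Proof.
have wE := esym (RRe_real (normr_real w)).
rewrite fuss_radius_complex wE ltcR => w_lt.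
have rhoR_gt0 := fuss_radius_gt0 R k_ge2.
apply: (@cvgn_complex_series_geom_dom _ _ (complex.Re `|w| / fuss_radius R k)).
  by rewrite ltr_pdivrMr // mul1r w_lt divr_ge0 ?(ltW rhoR_gt0) // -ler0c -wE.
move=> i; apply: le_trans (norm_fuss_term_le w i) _.
by rewrite fuss_radius_complex {1}wE -fmorph_div -rmorphXn.
Qed.

Lemma fuss_inv_series_tail (w : C) (s : R) n : (2 <= n)%N ->
  complex.Re `|w| < s -> s < fuss_radius R k ->
  `|fuss_inv k (series (fuss_term w) n) - w|
    <= ((1 - s / fuss_radius R k)^-1 ^+ k
        * ((complex.Re `|w| / s) ^+ n / (1 - complex.Re `|w| / s)))%:C.
Proof.
move=> n_ge2 r_lt_s s_lt; have wE := esym (RRe_real (normr_real w)).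
rewrite -(prednK (ltnW n_ge2)) series_fuss_term -horner_fuss_inv.
have rs : (complex.Re `|w|)%:C < s%:C by rewrite ltcR.
have srho : s%:C < fuss_radius C k by rewrite fuss_radius_complex ltcR.
apply: le_trans (fuss_inv_trunc_tail k_ge2 _ _ _ rs srho) _.
- by rewrite -ltnS prednK // ltnW.
- by rewrite -wE.
- by rewrite -wE.
by rewrite fuss_radius_complex !(rmorphM, rmorphXn, fmorphV, rmorphB, rmorph1).
Qed.

Lemma fuss_inv_fussS (w : C) : `|w| < fuss_radius C k -> fuss_inv k (fussS k w) = w.
Proof.
move=> w_lt; have S_cvg := fussS_cvg w_lt.
set rhoR := fuss_radius R k; set r := complex.Re `|w|.
have r_ge0 : 0 <= r by rewrite -ler0c RRe_real ?normr_real.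
have r_lt : r < rhoR by rewrite -ltcR RRe_real ?normr_real // -fuss_radius_complex.
set s := (r + rhoR) / 2.
have r_lt_s : r < s by rewrite /s; lra.
have s_lt : s < rhoR by rewrite /s; lra.
set t := r / s; set G := (1 - s / rhoR)^-1.
have t_ge0 : 0 <= t by rewrite divr_ge0 // ltW // (le_lt_trans r_ge0).
have t_lt1 : t < 1 by rewrite ltr_pdivrMr ?mul1r // (le_lt_trans r_ge0).
have inv_cvg : (fuss_inv k (series (fuss_term w) n) : C) @[n --> \oo]
                --> (fuss_inv k (fussS k w) : C).
  rewrite /fuss_inv; apply: cvgM; first exact: S_cvg.
  by apply: cvgXn; apply: cvgB S_cvg; exact: cvg_cst.
suff inv_cvgw : (fuss_inv k (series (fuss_term w) n) : C) @[n --> \oo] --> (w : C).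
  exact: (@norm_cvg_unique C C _ _ _ _ inv_cvg inv_cvgw).
apply: (@cvg_complex_real_dominated _ _ _ (fun n => G ^+ k * (t ^+ n / (1 - t)))).
  rewrite -(mulr0 (G ^+ k)) -(mul0r (1 - t)^-1).
  apply: cvgM; first exact: cvg_cst.
  by apply: cvgM; [apply: cvg_expr; rewrite ger0_norm | exact: cvg_cst].
near=> n; apply: fuss_inv_series_tail => //.
by near: n; exact: nbhs_infty_ge.
Unshelve. all: by end_near.
Qed.

End FussSeries.

Theorem lemma4p3 (R : realType) (k : nat) (p : R) (z : R[i]) :
  (2 <= k)%N -> 0 < p < 1 ->
  `|z| < (Rstar k p)%:C ->
  ((1 - p)%:C)^-1 * fussS k ((p ^+ k.-1 * (1 - p))%:C * z) = 1 ->
  z = 1.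
Proof.
move=> k_ge2 /andP[p_gt0 p_lt1] z_lt S_eq.
set c := p ^+ k.-1 * (1 - p).
have c_gt0 : 0 < c by rewrite mulr_gt0 ?exprn_gt0 ?subr_gt0.
have cC_neq0 : c%:C != 0 :> R[i] by rewrite fmorph_eq0 gt_eqF.
have qC_neq0 : (1 - p)%:C != 0 :> R[i] by rewrite fmorph_eq0 subr_eq0 gt_eqF.
have w_lt : `|c%:C * z| < fuss_radius (Num.ClosedField.sort R[i]) k.
  rewrite normrM normc_real (ger0_norm (ltW c_gt0)) fuss_radius_complex.
  have -> : fuss_radius R k = c * Rstar k p.
    by rewrite /Rstar mulrCA mulfV ?gt_eqF ?mulr1.
  by rewrite [(c * _)%:C]rmorphM ltr_pM2l // ltcR.
have := fuss_inv_fussS k_ge2 w_lt.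
have -> : fussS k (c%:C * z) = (1 - p)%:C.
  by apply: (mulfI (invr_neq0 qC_neq0)); rewrite S_eq mulVf.
have -> : fuss_inv k (1 - p)%:C = c%:C * 1.
  rewrite /fuss_inv /c !(rmorphM, rmorphXn, rmorphB, rmorph1) (subKr 1).
  by rewrite mulr1 mulrC.
by move=> /(mulfI cC_neq0).
Qed.
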